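(* Let $\Delta$ be an ordinary subgraph of $T$ and let $\varepsilon$ be the minimal integer direction vector of an edge (one-dimensional face) of the cone $C_\Delta$. Then there exist two ordinary subgraphs $\Delta_1,\Delta_2$ of $T$ with disjoint node sets whose union is the node set of $\Delta$, with the top node $(i_\Delta,j_\Delta)$ belonging to $\Delta_1$, such that $\varepsilon_{i,j}=0$ for all nodes $(i,j)$ of $\Delta_1$, and $\varepsilon_{i,j}=c$ for all nodes $(i,j)$ of $\Delta_2$, for a single constant $c\in\{1,-1\}$.
   Context: Fix $n\ge 1$. Let $T$ be the graph with node set $\{(i,j):0\le i\le n-1,\ 1\le j\le n-i\}$ (''row $i$'' consists of the nodes $(i,\cdot)$) in which, for every $1\le i\le n-1$, $1\le j\le n-i$, the node $(i,j)$ is adjacent to $(i-1,j)$ and to $(i-1,j+1)$, and there are no other edges. A subgraph $\Delta\subset T$ is ordinary if it is connected, induced, and whenever it contains both $(i,j)$ and $(i,j+1)$ it also contains $(i-1,j+1)$ and $(i+1,j)$. For ordinary $\Delta$ the smallest-index row meeting $\Delta$ contains exactly one node of $\Delta$, the top node $(i_\Delta,j_\Delta)$. In $\mathbb R^{n(n+1)/2}$ with coordinates $x_{i,j}$ indexed by nodes of $T$, $C_\Delta$ is the set of $x$ with: $x_{i,j}=0$ for $(i,j)\notin\Delta$; $x_{i_\Delta,j_\Delta}=0$; $x_{i-1,j}\ge x_{i,j}$ for every edge of $\Delta$ joining $(i,j)$ and $(i-1,j)$; $x_{i,j}\ge x_{i-1,j+1}$ for every edge of $\Delta$ joining $(i,j)$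 and $(i-1,j+1)$. *)

From HB Require Import structures.
From mathcomp Require Import all_boot all_order all_algebra.
Set Implicit Arguments. Unset Strict Implicit. Unset Printing Implicit Defensive.
Import Order.TTheory GRing.Theory Num.Theory.
Local Open Scope ring_scope.

Definition node (n : nat) :=
  {p : 'I_n * 'I_n.+1 | (1 <= p.2 <= n - p.1)%N}.

Definition row {n} (u : node n) : nat := (val u).1.
Definition col {n} (u : node n) : nat := (val u).2.

(* Edges of T: (i,j) -- (i-1,j) and (i,j) -- (i-1,j+1), i >= 1. *)
Definition adjT {n} (u v : node n) : bool :=
  ((row u == (row v).+1) && ((col v == col u) || (col v == (col u).+1)))
  || ((row v == (row u).+1) && ((col u == col v) || (col u == (col v).+1))).

Definition inD {n} (D : {set node n}) (i j : nat) : bool :=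
  [exists u in D, (row u == i) && (col u == j)].

Definition connectedD {n} (D : {set node n}) : Prop :=
  D != set0 /\
  forall u v, u \in D -> v \in D ->
    connect [rel x y | [&& x \in D, y \in D & adjT x y]] u v.

(* ordinary subgraph (induced subgraphs are identified with their node sets) *)
Definition ordinary {n} (D : {set node n}) : Prop :=
  connectedD D /\
  forall u v, u \in D -> v \in D -> row v = row u -> col v = (col u).+1 ->
    [/\ (0 < row u)%N, inD D (row u).-1 (col u).+1 & inD D (row u).+1 (col u)].

Definition is_top {n} (D : {set node n}) (t : node n) : Prop :=
  t \in D /\ forall u, u \in D -> (row t <= row u)%N.

Definition coneC {R : realFieldType} {n} (D : {set node n}) (x : node n -> R)
  : Prop :=
  [/\ (forall u, u \notin D -> x u = 0),
      (forall t, is_top D t -> x t = 0),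
      (forall u v, u \in D -> v \in D -> row u = (row v).+1 -> col v = col u ->
          x u <= x v)
    &
      (forall u v, u \in D -> v \in D -> row u = (row v).+1 ->
          col v = (col u).+1 -> x v <= x u)].

Definition is_face {R : realFieldType} {n} (C F : (node n -> R) -> Prop)
  : Prop :=
  exists a : node n -> R,
    (forall x, C x -> 0 <= \sum_u a u * x u) /\
    (forall x, F x <-> (C x /\ \sum_u a u * x u = 0)).

Definition primitive {n} (eps : node n -> int) : Prop :=
  forall d : nat, (forall u, (d%:Z %| eps u)%Z) -> d = 1%N.

(* eps is the minimal integer direction vector of an edge (a 1-dimensional
   face) of the cone C_D: there is a face F of C_D whose linear span is the
   line R*eps, with eps in F, and eps is primitive. *)
Definition edge_direction (R : realFieldType) {n} (D : {set node n})
  (eps : node n -> int) : Prop :=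
  primitive eps /\
  exists F : (node n -> R) -> Prop,
    [/\ is_face (coneC D) F,
        F (fun u => (eps u)%:~R)
      & forall x, F x -> exists t : R, forall u, x u = t * (eps u)%:~R].

(* Since eps lies on an edge of C_D, any decomposition eps = (eps + y)/2 + (eps - y)/2
   into two vectors of C_D has eps + y on the edge, i.e. proportional to eps. Take w with
   eps w <> 0 and let K be the component of w in the level set {eps = eps w}. The integer
   vector eps jumps by at least 1 across the boundary of K, and K misses the top node
   (where eps = 0), so eps + 1_K and eps - 1_K stay in C_D; then eps + 1_K = t eps forces
   eps = 0 off K. Hence eps takes the values 0 and c = eps w only, and c = 1 or -1 by
   primitivity. The same argument shows that the component of any zero of eps contains
   the top node, so {eps = 0} is connected. Both level sets are ordinary because the two
   cone inequalities around a horizontal pair squeeze the values of the nodes just above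
   and just below it. Finally, the top node of an ordinary subgraph is unique: a path
   between two nodes of the minimal row can be shortened by replacing each local maximum
   of the row index by the common upper neighbour of its two neighbours. *)

From Pilot Require Import Defs.
From HB Require Import structures.
From mathcomp Require Import all_boot all_order all_algebra.
From mathcomp Require Import zify ring lra.
Import Order.TTheory GRing.Theory Num.Theory.
(* Imported again so that [row] denotes the row of a node, not a matrix row. *)
From Pilot Require Import Defs.

Definition induced {n} (A : {set node n}) : rel (node n) :=
  [rel x y | [&& x \in A, y \in A & adjT x y]].

Section TriangleGraph.
Context {n : nat}.
Implicit Types (u v : node n) (A : {set node n}).

Lemma node_inj {u v} : row u = row v -> col u = col v -> u = v.
Proof.
case: u v => [[a b] Hu] [[c d] Hv]; rewrite /row /col /= => Hac Hbd.
by apply: val_inj => /=; congr pair; exact: val_inj.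
Qed.

Lemma adjT_sym u v : adjT u v = adjT v u.
Proof. by rewrite /adjT orbC. Qed.

Lemma adjT_row {u v} : adjT u v -> row u = (row v).+1 \/ row v = (row u).+1.
Proof. by case/orP=> /andP[/eqP-> _]; [left | right]. Qed.

Lemma adjT_col {u v} : adjT u v -> row u = (row v).+1 ->
  col v = col u \/ col v = (col u).+1.
Proof.
case/orP=> /andP[/eqP ruv /orP[]] /eqP cuv; rewrite ?ruv ?cuv; try by [left | right].
all: lia.
Qed.

Lemma adjT_down u v : row u = (row v).+1 ->
  col v = col u \/ col v = (col u).+1 -> adjT u v.
Proof. by move=> ruv [] cuv; rewrite /adjT ruv cuv !eqxx ?orbT. Qed.

Lemma induced_sym A : symmetric (induced A).
Proof. by move=> u v; rewrite /induced /= adjT_sym andbCA. Qed.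

Lemma induced_subrel A : subrel (induced A) adjT.
Proof. by move=> u v /and3P[]. Qed.

Lemma induced_closed A : closed (induced A) A.
Proof. by move=> u v /and3P[-> -> _]. Qed.

Lemma path_peak {e : rel (node n)} : subrel e adjT -> forall x s,
  path e x s -> (row x < row (head x s))%N -> (row (last x s) <= row x)%N ->
  exists s1 b c s2, [/\ s = s1 ++ [:: b, c & s2],
    row b = (row (last x s1)).+1 & row b = (row c).+1].
Proof.
move=> eA x s; elim: s x => [|y s IH] x /=; first by rewrite ltnn.
case/andP=> exy pys lt_xy le_last.
case: s IH pys le_last => [|z s] IH pys le_last.
  by move: le_last; rewrite /= leqNgt lt_xy.
have /andP[eyz _] := pys.
have Hxy : row y = (row x).+1 by case: (adjT_row (eA _ _ exy)) lt_xy => /= ->; lia.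
case: (adjT_row (eA _ _ eyz)) => Hyz; first by exists [::], y, z, s.
have [||s1 [b [c [s2 [-> Hb Hc]]]]] := IH y pys; first by rewrite /= Hyz.
  by move: le_last; rewrite Hxy /=; lia.
by exists (y :: s1), b, c, s2.
Qed.

End TriangleGraph.

Section OrdinaryTop.
Context {n : nat} {D : {set node n}}.
Hypothesis hD : ordinary D.
Implicit Types (u v : node n).

Lemma ordinary_above {u v} : u \in D -> v \in D -> row v = row u ->
  col v = (col u).+1 -> exists2 w, induced D u w & induced D w v /\ row u = (row w).+1.
Proof.
move=> uD vD ruv cuv.
have [ru_gt0 /existsP[w /and3P[wD /eqP rw /eqP cw]] _] := hD.2 u v uD vD ruv cuv.
have ruw : row u = (row w).+1 by rewrite rw prednK.
exists w; first by rewrite /induced /= uD wD adjT_down //; right.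
split=> //; rewrite /induced /= wD vD adjT_sym adjT_down ?ruv //; left; congruence.
Qed.

Lemma ordinary_peak_shortcut {a b c} : induced D a b -> induced D b c ->
  row b = (row a).+1 -> row b = (row c).+1 -> a != c ->
  exists2 w, induced D a w & induced D w c /\ row b = (row w).+2.
Proof.
move=> eab ebc rba rbc neq_ac.
have /and3P[aD bD] := eab; rewrite adjT_sym => /adjT_col cba.
have /and3P[_ cD /adjT_col cbc] := ebc.
have rac : row c = row a by congruence.
have [cca | cac] : col c = (col a).+1 \/ col a = (col c).+1.
  have : col a != col c by exact: contra_neq (node_inj (esym rac)) neq_ac.
  by case: (cba rba) => ->; case: (cbc rbc) => ->; rewrite ?eqxx // => _; [left | right].
- by have [w ? [? rw]] := ordinary_above aD cD rac cca; exists w; rewrite // rba rw.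
- have [w ewc [ewa rw]] := ordinary_above cD aD (esym rac) cac.
  by exists w; rewrite 1?induced_sym // rbc rw.
Qed.

Lemma ordinary_min_row_path {m s x} : (forall u, u \in D -> (m <= row u)%N) ->
  path (induced D) x s -> row x = m -> row (last x s) = m -> last x s = x.
Proof.
move=> hm; have [k] := ubnP (sumn [seq (row v).+1 | v <- s]).
elim: k s x => [|k IH] // [|y s] x // hk hp rx rl.
have up : (row x < row (head x (y :: s)))%N.
  have /andP[/and3P[_ yD /adjT_row]] := hp.
  by have := hm _ yD; rewrite /=; lia.
have [|s1 [b [c [s2 [def_s rb rc]]]]] := path_peak (@induced_subrel _ D) x _ hp up.
  by rewrite rl rx.
rewrite def_s last_cat /= in hk hp rl *.
move: hk hp; rewrite map_cat sumn_cat cat_path /= => hk /and3P[p1 eab /andP[ebc p2]].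
case: (eqVneq (last x s1) c) => [eac | nac].
  have := IH (s1 ++ s2) x; rewrite last_cat eac; apply=> //.
    by rewrite map_cat sumn_cat; lia.
  by rewrite cat_path p1 eac.
have [w eaw [ewc rw]] := ordinary_peak_shortcut eab ebc rb rc nac.
have := IH (s1 ++ [:: w, c & s2]) x; rewrite last_cat /=; apply=> //.
  by rewrite map_cat sumn_cat /=; lia.
by rewrite cat_path p1 /= eaw ewc.
Qed.

Lemma ordinary_top_unique {t1 t2} : is_top D t1 -> is_top D t2 -> t1 = t2.
Proof.
move=> [t1D min1] [t2D min2].
have /connectP[s hp def_t2] := hD.1.2 t1 t2 t1D t2D.
rewrite def_t2 (ordinary_min_row_path min1 hp erefl) // -def_t2.
by apply/eqP; rewrite eqn_leq min1 // min2.
Qed.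

Lemma ordinary_exists_top : exists t, is_top D t.
Proof.
have /set0Pn[u0 u0D] := hD.1.1.
by exists [arg min_(u < u0 in D) row u]; case: arg_minnP.
Qed.

End OrdinaryTop.

Local Open Scope ring_scope.

Section ConeFaces.
Context {R : realFieldType} {n : nat}.
Implicit Types (x y : node n -> R) (D K : {set node n}).

Lemma face_extreme {C F : (node n -> R) -> Prop} {x y} : is_face C F -> F x ->
  C (fun u => x u + y u) -> C (fun u => x u - y u) -> F (fun u => x u + y u).
Proof.
move=> [a [a_ge0 defF]] /defF[Cx ax0] Cxy Cx_y; apply/defF; split=> //.
have := a_ge0 _ Cxy; have := a_ge0 _ Cx_y.
have : \sum_u a u * (x u + y u) + \sum_u a u * (x u - y u) = 0.
  rewrite -big_split (eq_bigr (fun u => 2 * (a u * x u))) => [|u _] /=; last by ring.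
  by rewrite -mulr_sumr ax0 mulr0.
lra.
Qed.

Lemma coneC_add_indicator D K x y (d : R) : coneC D x -> K \subset D ->
  (forall t, is_top D t -> t \notin K) ->
  (forall u v, u \in D -> v \in D -> adjT u v -> x u <= x v ->
     (u \in K) != (v \in K) -> x u + 1 <= x v) ->
  -1 <= d <= 1 -> (forall u, y u = if u \in K then d else 0) ->
  coneC D (fun u => x u + y u).
Proof.
move=> [x0 xtop xle1 xle2] /subsetP sKD Ktop gap /andP[d_ge d_le] yE.
have y0 u : u \notin K -> y u = 0 by rewrite yE => /negbTE->.
have step u v : u \in D -> v \in D -> adjT u v -> x u <= x v ->
    x u + y u <= x v + y v.
  move=> uD vD uv le_uv; have [eqK | neK] := eqVneq (u \in K) (v \in K).
    by rewrite !yE eqK lerD2r.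
  have := gap u v uD vD uv le_uv neK; move: neK; rewrite !yE.
  by case: (u \in K); case: (v \in K) => //= _; lra.
split.
- by move=> u uD; rewrite x0 // y0 ?addr0 //; apply: contra uD; exact: sKD.
- by move=> t ht; rewrite xtop // y0 ?addr0 //; exact: Ktop.
- move=> u v uD vD ruv cuv.
  by apply: step; rewrite ?adjT_down ?cuv //; [left | exact: xle1].
- move=> u v uD vD ruv cuv.
  by apply: step; rewrite 1?adjT_sym ?adjT_down ?cuv //; [right | exact: xle2].
Qed.

End ConeFaces.

Lemma absz_eq1 (z : int) : `|z|%N = 1%N -> z = 1 \/ z = -1.
Proof. by case: z => [[|[|k]]|[|k]] //= _; [left | right]. Qed.

Definition level_set {n} (D : {set node n}) (eps : node n -> int) (c : int) :=
  [set u in D | eps u == c].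

Section EdgeDirection.
Context {R : realFieldType} {n : nat} {D : {set node n}} {eps : node n -> int}.
Hypotheses (hD : ordinary D) (heps : edge_direction R D eps).
Implicit Types (u v w : node n).

Let er u : R := (eps u)%:~R.
Local Notation level := (level_set D eps).
Local Notation component w := [set u | connect (induced (level (eps w))) w u].

Lemma edge_direction_cone : coneC D er.
Proof. by case: heps => _ [F [[a [_ defF]] /defF[]]]. Qed.

Lemma eps_top {t} : is_top D t -> eps t = 0.
Proof.
by case: edge_direction_cone => _ er_top _ _ /er_top/eqP; rewrite intr_eq0 => /eqP.
Qed.

Lemma eps_notin u : u \notin D -> eps u = 0.
Proof.
by case: edge_direction_cone => er0 _ _ _ /er0/eqP; rewrite intr_eq0 => /eqP.
Qed.

Lemma edge_direction_extreme y : coneC D (fun u => er u + y u) ->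
  coneC D (fun u => er u - y u) -> exists t : R, forall u, er u + y u = t * er u.
Proof.
case: heps => _ [F [faceF Feps line]] Cy C_y.
exact: line _ (face_extreme (x := er) faceF Feps Cy C_y).
Qed.

Lemma component_sub_level {w} : w \in D -> component w \subset level (eps w).
Proof.
move=> wD; apply/subsetP => u; rewrite inE => /(closed_connect (induced_closed _)) <-.
by rewrite !inE wD eqxx.
Qed.

Lemma component_level {w u} : w \in D -> u \in component w -> eps u = eps w.
Proof.
by move=> wD /(subsetP (component_sub_level wD)); rewrite !inE => /andP[_ /eqP].
Qed.

Lemma component_closed {w u v} : w \in D -> u \in D -> v \in D -> adjT u v ->
  eps u = eps v -> (u \in component w) = (v \in component w).
Proof.
move=> wD uD vD uv euv; have [euw | neuw] := eqVneq (eps u) (eps w).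
  rewrite !inE; apply: (connect_closed (sym_connect_sym (@induced_sym _ _))).
  by rewrite /induced /= !inE uD vD uv -euv euw eqxx.
have notin x : eps x != eps w -> x \notin component w.
  by apply: contra => /(component_level wD) ->.
by rewrite !(negbTE (notin _ _)) // -euv.
Qed.

Lemma component_scaling {w} : w \in D ->
  (forall t, is_top D t -> t \notin component w) ->
  exists t : R, forall u, er u + (if u \in component w then 1 else 0) = t * er u.
Proof.
move=> wD Ktop.
have sKD : component w \subset D.
  by apply/subsetP => u /(subsetP (component_sub_level wD)); rewrite inE => /andP[].
have gap u v : u \in D -> v \in D -> adjT u v -> er u <= er v ->
    (u \in component w) != (v \in component w) -> er u + 1 <= er v.
  move=> uD vD uv le_uv neK.
  have ne : eps u != eps v.
    by apply: contraNneq neK => /(component_closed wD uD vD uv) ->.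
  have : eps u + 1 <= eps v by rewrite lezD1 lt_neqAle ne -(ler_int R).
  by rewrite -(ler_int R) intrD.
apply: (edge_direction_extreme (fun u => if u \in component w then 1 else 0)).
- apply: (coneC_add_indicator _ _ _ _ 1 edge_direction_cone sKD Ktop gap).
    by apply/andP; split; lra.
  by move=> u; case: (u \in component w).
- apply: (coneC_add_indicator _ _ _ _ (-1) edge_direction_cone sKD Ktop gap).
    by apply/andP; split; lra.
  by move=> u; case: (u \in component w); rewrite ?oppr0.
Qed.

Lemma exists_eps_neq0 : exists2 w, w \in D & eps w != 0.
Proof.
case: heps => hprim _; have [w epsw | eps0] := pickP (fun u => eps u != 0).
  by exists w => //; apply: contraTT epsw => /eps_notin ->.
suff /hprim : forall u, (0%:Z %| eps u)%Z by [].
by move=> u; rewrite dvd0z; apply/negbFE/eps0.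
Qed.

Lemma eps_off_component {w u} : w \in D -> eps w != 0 ->
  u \notin component w -> eps u = 0.
Proof.
move=> wD epsw uK.
have Ktop t : is_top D t -> t \notin component w.
  by move/eps_top=> et; apply: contraNN epsw => /(component_level wD) <-; rewrite et.
have [s hs] := component_scaling wD Ktop.
have := hs w; have := hs u; rewrite (negbTE uK) inE connect0 /= addr0 => hu hw.
have s1 : s != 1 by apply: contraTneq isT => s1; move: hw; rewrite s1; lra.
have : (s - 1) * er u = 0 by rewrite mulrBl mul1r -hu subrr.
by move/eqP; rewrite mulf_eq0 subr_eq0 (negbTE s1) intr_eq0 => /eqP.
Qed.

Lemma level0_connect_top {v t} : v \in D -> eps v = 0 -> is_top D t ->
  connect (induced (level 0)) v t.
Proof.
move=> vD ev ht; apply: contraT => nvt.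
have Ktop t' : is_top D t' -> t' \notin component v.
  by move=> ht'; rewrite -(ordinary_top_unique hD ht ht') inE ev.
have [s hs] := component_scaling vD Ktop.
by have := hs v; rewrite inE connect0 /er ev /= mulr0 add0r => /eqP; rewrite oner_eq0.
Qed.

Lemma level0_connected : connectedD (level 0).
Proof.
have [t ht] := ordinary_exists_top hD.
split; first by apply/set0Pn; exists t; rewrite inE ht.1 eps_top.
move=> v1 v2; rewrite !inE => /andP[v1D /eqP e1] /andP[v2D /eqP e2].
apply: connect_trans (level0_connect_top v1D e1 ht) _.
by rewrite (sym_connect_sym (@induced_sym _ _)) level0_connect_top.
Qed.

Lemma level_component_connected {w} : w \in D -> eps w != 0 ->
  connectedD (level (eps w)).
Proof.
move=> wD epsw.
have from_w u : u \in level (eps w) -> connect (induced (level (eps w))) w u.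
  rewrite inE => /andP[uD /eqP eu]; apply: contraTT (epsw) => nK.
  by rewrite negbK -eu (eps_off_component wD epsw) // inE.
split; first by apply/set0Pn; exists w; rewrite inE wD eqxx.
move=> v1 v2 /from_w h1 /from_w; apply: connect_trans.
by rewrite (sym_connect_sym (@induced_sym _ _)).
Qed.

Lemma eps_dichotomy {w} u : w \in D -> eps w != 0 -> eps u = 0 \/ eps u = eps w.
Proof.
move=> wD epsw; have [uK | uK] := boolP (u \in component w).
  by right; exact: component_level wD uK.
by left; exact: eps_off_component wD epsw uK.
Qed.

Lemma eps_unit w : w \in D -> eps w != 0 -> eps w = 1 \/ eps w = -1.
Proof.
move=> wD epsw; apply: absz_eq1; case: heps => hprim _; apply: hprim => u.
by case: (eps_dichotomy u wD epsw) => ->; [exact: dvdz0 | exact: dvdnn].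
Qed.

Lemma level_horizontal c u v : u \in level c -> v \in level c ->
  row v = row u -> col v = (col u).+1 ->
  [/\ (0 < row u)%N, inD (level c) (row u).-1 (col u).+1
    & inD (level c) (row u).+1 (col u)].
Proof.
rewrite !inE => /andP[uD /eqP eu] /andP[vD /eqP ev] ruv cuv.
have [ru_gt0 /existsP[p /and3P[pD /eqP rp /eqP cp]]
  /existsP[q /and3P[qD /eqP rq /eqP cq]]] := hD.2 u v uD vD ruv cuv.
have rup : row u = (row p).+1 by rewrite rp prednK.
case: edge_direction_cone => _ _ le_down le_diag.
have ep : eps p = c.
  apply/le_anti/andP; split; [rewrite -eu | rewrite -ev]; rewrite -(ler_int R).
    exact: le_diag.
  by apply: le_down; rewrite ?ruv ?cp ?cuv.
have eq : eps q = c.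
  apply/le_anti/andP; split; [rewrite -eu | rewrite -ev]; rewrite -(ler_int R).
    by apply: le_down; rewrite ?cq.
  by apply: le_diag; rewrite ?rq ?ruv ?cuv ?cq.
split=> //; apply/existsP; [exists p | exists q];
  by rewrite !inE ?pD ?qD ?ep ?eq ?rp ?cp ?rq ?cq !eqxx.
Qed.

Lemma level_ordinary c : connectedD (level c) -> ordinary (level c).
Proof. by split=> //; exact: level_horizontal. Qed.

End EdgeDirection.

Theorem mainTheorem6 (R : realFieldType) (n : nat) (hn : (1 <= n)%N)
  (D : {set node n}) (hD : ordinary D) (eps : node n -> int)
  (heps : edge_direction R D eps) :
  exists D1 D2 : {set node n},
    [/\ ordinary D1, ordinary D2, D1 :&: D2 = set0 & D1 :|: D2 = D] /\
    [/\ (forall t, is_top D t -> t \in D1),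
        (forall u, u \in D1 -> eps u = 0%R)
      & exists c : int, (c = 1%R \/ c = (-1)%R) /\
          (forall u, u \in D2 -> eps u = c)].
Proof.
have [w wD epsw] := exists_eps_neq0 heps.
exists (level_set D eps 0), (level_set D eps (eps w)); split; split.
- exact: (level_ordinary hD heps 0 (level0_connected hD heps)).
- exact: (level_ordinary hD heps _ (level_component_connected heps wD epsw)).
- apply/setP => u; rewrite !inE andbACA andbb.
  by case: eqP => [->|_]; rewrite ?andbF // eq_sym (negbTE epsw) !andbF.
- apply/setP => u; rewrite !inE -andb_orr; case: (boolP (u \in D)) => //= uD.
  by case: (eps_dichotomy heps u wD epsw) => ->; rewrite eqxx ?orbT.
- by move=> t ht; rewrite inE ht.1 (eps_top heps ht).
- by move=> u; rewrite inE => /andP[_ /eqP].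
- exists (eps w); split; first exact: eps_unit heps _ wD epsw.
  by move=> u; rewrite inE => /andP[_ /eqP].
Qed.
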